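(* In the setting where $M$ has $3$ edges, $p,q\in(0,1]$, $(\omega_e)_{e\in E_\varGamma}$ and $(\omega_{e,j,g})$ are mutually independent Bernoulli variables with means $p$ and $q$ respectively, and $$\widehat C_M=\frac{1}{3pq}\sum_{e\in E_\varGamma}\sum_{j=1}^{3}\sum_{g\in E_j(e)}\omega_e\,\omega_{e,j,g}\,\eta(W_{e,j,g}),$$ for every $\varepsilon>0$ (assuming $C_M>0$) we have $\Pr\big[|\widehat C_M-C_M|\ge\varepsilon C_M\big]\le\frac{1-pq}{pq\,\varepsilon^2}$.
   Context: A temporal graph $\varGamma=(V_\varGamma,E_\varGamma)$ consists of a finite vertex set $V_\varGamma$ and a finite sequence $E_\varGamma$ of $m$ temporal edges $(u,v,t)$, $u,v\in V_\varGamma$, $t\in\mathbb{R}^+$, with distinct timestamps. A temporal motif $M$ is an ordered sequence of $l$ directed edges $\langle e'_1=(u'_1,v'_1),\dots,e'_l=(u'_l,v'_l)\rangle$ on a vertex set $V_M$ whose underlying graph is connected; here $l=3$ (and $|V_M|=3$). Fix $\delta\ge0$. A sequence $\langle (w_1,x_1,t_1),\dots,(w_l,x_l,t_l)\rangle$ of edges of $E_\varGamma$ with $t_1<\dots<t_l$ is a $\delta$-instance of $M$ if there is a bijection $f$ from its vertices to $V_M$ with $f(w_i)=u'_i$, $f(x_i)=v'_i$ for all $i$, and $t_l-t_1\le\delta$. $C_M$ is the number of $\delta$-instances of $M$ in $\varGamma$; $\eta_j(e)$ is the number of $\delta$-instances of $M$ whose $j$-th edge is $e$. Wedge data: for each $e\in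 E_\varGamma$ and $j\in\{1,2,3\}$ there is a finite set $E_j(e)\subseteq E_\varGamma$ and for each $g\in E_j(e)$ a nonnegative integer $\eta(W_{e,j,g})$ (the number of $\delta$-instances of $M$ containing the temporal wedge formed by $e$ and $g$, with $e$ mapped to $e'_j$), such that $\sum_{g\in E_j(e)}\eta(W_{e,j,g})=\eta_j(e)$. *)

From HB Require Import structures.
From mathcomp Require Import all_boot all_order all_algebra.
From mathcomp Require Import all_classical all_reals all_analysis.
Set Implicit Arguments. Unset Strict Implicit. Unset Printing Implicit Defensive.
Import Order.TTheory GRing.Theory Num.Theory.
Local Open Scope ring_scope.

(* A temporal graph is given by a finite vertex type V and a sequence of m
   temporal edges, edge k : 'I_m being (src k, dst k, time k).
   A 3-edge temporal motif on the vertex set V_M = 'I_3 is given by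
   mu : 'I_3 -> 'I_3 * 'I_3, mu i = (u'_i, v'_i). *)

Definition motif_rel (mu : 'I_3 -> 'I_3 * 'I_3) : rel 'I_3 :=
  fun a b => [exists i, (mu i == (a, b)) || (mu i == (b, a))].

Definition motif_connected (mu : 'I_3 -> 'I_3 * 'I_3) : Prop :=
  forall a b : 'I_3, connect (motif_rel mu) a b.

Section Instances.
Variables (R : realType) (V : finType) (m : nat).
Variables (src dst : 'I_m -> V) (time : 'I_m -> R).
Variables (mu : 'I_3 -> 'I_3 * 'I_3) (delta : R).

Definition inst_vertices (e : {ffun 'I_3 -> 'I_m}) : {set V} :=
  [set v | [exists i, (src (e i) == v) || (dst (e i) == v)]].

Definition is_instance (e : {ffun 'I_3 -> 'I_m}) : bool :=
  [&& time (e ord0) < time (e (inord 1)),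
      time (e (inord 1)) < time (e (inord 2)),
      time (e (inord 2)) - time (e ord0) <= delta &
      [exists f : {ffun V -> 'I_3},
        [&& [forall i, (f (src (e i)) == (mu i).1) && (f (dst (e i)) == (mu i).2)],
            [forall v in inst_vertices e, forall w in inst_vertices e,
               (f v == f w) ==> (v == w)] &
            [forall a, exists v in inst_vertices e, f v == a]]]].

Definition motif_count : nat := #|[set e | is_instance e]|.

Definition eta_at (j : 'I_3) (e0 : 'I_m) : nat :=
  #|[set e | is_instance e & e j == e0]|.

End Instances.

Definition mutually_independent d (T : measurableType d) (R : realType)
  (P : probability T R) (I : finType) (A : {set I}) (X : I -> T -> bool) : Prop :=
  forall (S : {set I}) (b : I -> bool), S \subset A ->
    fine (P [set t | forall i, i \in S -> X i t = b i]%classic)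
    = \prod_(i in S) fine (P [set t | X i t = b i]%classic).

(* Index type of the Bernoulli variables: inl e is omega_e,
   inr (e, j, g) is omega_{e,j,g}. *)
Definition var_index (m : nat) : finType :=
  ('I_m + ('I_m * 'I_3 * 'I_m))%type.

Definition relevant_vars (m : nat) (Ej : 'I_m -> 'I_3 -> {set 'I_m})
  : {set var_index m} :=
  [set x : var_index m | match x with
                         | inl _ => true
                         | inr egj => egj.2 \in Ej egj.1.1 egj.1.2 end].

Definition estimator d (T : measurableType d) (R : realType) (m : nat)
  (p q : R) (Ej : 'I_m -> 'I_3 -> {set 'I_m}) (etaW : 'I_m -> 'I_3 -> 'I_m -> nat)
  (X : var_index m -> T -> bool) (t : T) : R :=
  (3 * p * q)^-1 *
  \sum_(e : 'I_m) \sum_(j : 'I_3) \sum_(g in Ej e j)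
     ((X (inl e) t)%:R * (X (inr (e, j, g)) t)%:R * (etaW e j g)%:R).

From HB Require Import structures.
From mathcomp Require Import all_boot all_order all_algebra.
From mathcomp Require Import all_classical all_reals all_analysis.
From mathcomp Require Import ring lra.
Set Implicit Arguments. Unset Strict Implicit. Unset Printing Implicit Defensive.
Import Order.TTheory GRing.Theory Num.Theory.
Local Open Scope ring_scope.

(* The estimator only depends on the finitely many Bernoulli outcomes, so we
   push the probability forward along the random vector of outcomes: on the
   finite type of outcome vectors every probability is a finite sum of point
   masses (the law), and Chebyshev's inequality is a finite computation.
   General facts come first:
   - the law of a finite random variable and Chebyshev's inequality for it;
   - the variance bound Var f <= E f * (M - E f) for 0 <= f <= M, which
     replaces a full covariance computation (only pairwise products of
     independent variables are ever needed);
   For the estimator, independence gives E[omega_e omega_{e,j,g}] = pq, hence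
   E[Chat] = (sum of wedge weights) / 3, and 0 <= Chat <= (sum of weights)/(3pq).
   Combinatorially, summing eta_j over all edges counts every instance once,
   so the wedge weights add up to 3 C_M; thus E[Chat] = C_M and
   0 <= Chat <= C_M / (pq).
   The theorem is then Chebyshev with threshold eps * C_M. *)

Section FiniteLaw.
Variables (d : measure_display) (T : measurableType d) (R : realType).
Variables (P : probability T R) (K : finType) (v : T -> K).
Hypothesis v_meas : forall k, measurable [set t | v t = k]%classic.

Definition law (k : K) : R := fine (P [set t | v t = k]%classic).

Lemma law_ge0 k : 0 <= law k.
Proof. exact/fine_ge0/measure_ge0. Qed.

Lemma prob_preimage (Q : pred K) :
  P [set t | Q (v t)]%classic = (\sum_(k | Q k) law k)%:E.
Proof.
have partial s : uniq s ->
    measurable [set t | (v t \in s) && Q (v t)]%classic /\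
    P [set t | (v t \in s) && Q (v t)]%classic
      = (\sum_(k <- s | Q k) P [set t | v t = k]%classic)%E.
  elim: s => [|k s IH] /=.
    move=> _; have -> : [set t | (v t \in [::]) && Q (v t)]%classic = set0.
      by apply/seteqP; split => t //=; rewrite in_nil.
    by rewrite big_nil measure0.
  move=> /andP[k_notin_s /IH[meas_s P_s]]; rewrite big_cons.
  case Qk: (Q k); last first.
    suff -> : [set t | (v t \in k :: s) && Q (v t)]%classic =
              [set t | (v t \in s) && Q (v t)]%classic by [].
    apply/seteqP; split => t /=; rewrite in_cons; last by case/andP=> -> ->; rewrite orbT.
    by case/andP=> /orP[/eqP vk | ->] Qt //; move: Qt; rewrite vk Qk.
  have -> : [set t | (v t \in k :: s) && Q (v t)]%classic =
      ([set t | v t = k] `|` [set t | (v t \in s) && Q (v t)])%classic.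
    apply/seteqP; split => t /=.
      by rewrite in_cons; case/andP=> /orP[/eqP -> | ->] Qt; [left | right].
    case=> [-> | /andP[ts Qt]]; first by rewrite in_cons eqxx.
    by rewrite in_cons ts orbT.
  split; first exact: measurableU.
  rewrite measureU //; first by congr (_ + _)%E; exact: P_s.
  apply/seteqP; split => t //= [vk /andP[ts _]].
  by move: k_notin_s; rewrite -vk ts.
have [_] := partial _ (index_enum_uniq K).
have -> : [set t | (v t \in index_enum K) && Q (v t)]%classic =
          [set t | Q (v t)]%classic.
  by apply/seteqP; split => t /=; rewrite mem_index_enum.
move=> ->; rewrite -sumEFin; apply: eq_bigr => k _.
by rewrite fineK // fin_num_measure.
Qed.

Lemma law_sum1 : \sum_k law k = 1.
Proof.
have := prob_preimage predT.
have -> : [set t | predT (v t)]%classic = setT by apply/seteqP; split.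
by rewrite probability_setT => -[].
Qed.

Lemma chebyshev_finite (f : K -> R) (a e : R) : 0 < e ->
  (P [set t | (e <= `|f (v t) - a|)%R]%classic
     <= ((\sum_k law k * (f k - a) ^+ 2) / e ^+ 2)%R%:E)%E.
Proof.
move=> e_gt0; rewrite (prob_preimage (fun k => e <= `|f k - a|)) lee_fin.
rewrite mulr_suml [leLHS]big_mkcond; apply: ler_sum => k _.
rewrite -mulrA; case: ifP => [far | _]; last first.
  by apply: mulr_ge0 (law_ge0 k) _; apply: divr_ge0; apply: sqr_ge0.
rewrite -[leLHS]mulr1; apply: ler_wpM2l; first exact: law_ge0.
rewrite ler_pdivlMr ?exprn_gt0 // mul1r -[leRHS]real_normK ?num_real //.
by rewrite !expr2; apply: ler_pM => //; exact: ltW.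
Qed.

End FiniteLaw.

(* A random quantity with values in [0, M] and mean mu has variance at most
   mu * (M - mu), because E f^2 <= M * E f. Stated for arbitrary weights. *)
Lemma variance_le_bounded (R : realFieldType) (K : finType) (w f : K -> R)
    (M mu : R) :
  (forall k, 0 <= w k) -> \sum_k w k = 1 -> (forall k, 0 <= f k <= M) ->
  \sum_k w k * f k = mu ->
  \sum_k w k * (f k - mu) ^+ 2 <= mu * (M - mu).
Proof.
move=> w_ge0 w_sum1 f_bounded f_mean.
have expand : \sum_k w k * (f k - mu) ^+ 2 = \sum_k w k * f k ^+ 2 - mu ^+ 2.
  have -> : \sum_k w k * (f k - mu) ^+ 2 =
      \sum_k w k * f k ^+ 2 - 2 * mu * \sum_k w k * f k + mu ^+ 2 * \sum_k w k.
    by rewrite !mulr_sumr -sumrB -big_split; apply: eq_bigr => k _ /=; ring.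
  by rewrite f_mean w_sum1; ring.
have second_moment : \sum_k w k * f k ^+ 2 <= M * mu.
  rewrite -f_mean mulr_sumr; apply: ler_sum => k _.
  have /andP[f_ge0 f_leM] := f_bounded k.
  rewrite [leRHS]mulrCA expr2; apply: ler_wpM2l; first exact: w_ge0.
  exact: ler_wpM2r.
by rewrite expand; lra.
Qed.

Section WedgeEstimator.
Variables (R : realType) (m : nat) (p q : R).
Variables (Ej : 'I_m -> 'I_3 -> {set 'I_m}) (etaW : 'I_m -> 'I_3 -> 'I_m -> nat).
Hypotheses (p_gt0 : 0 < p) (q_gt0 : 0 < q).

Definition wedge (x : 'I_m * 'I_3 * 'I_m) : bool := x.2 \in Ej x.1.1 x.1.2.
Definition wedge_weight (x : 'I_m * 'I_3 * 'I_m) : R := (etaW x.1.1 x.1.2 x.2)%:R.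
Definition total_weight : R := \sum_(x | wedge x) wedge_weight x.

Local Notation outcome := {ffun var_index m -> bool}.

Definition estimate (k : outcome) : R :=
  (3 * p * q)^-1 *
  \sum_(x | wedge x) (k (inl x.1.1))%:R * (k (inr x))%:R * wedge_weight x.

Lemma estimate_bounds k : 0 <= estimate k <= (3 * p * q)^-1 * total_weight.
Proof.
have c_ge0 : 0 <= (3 * p * q)^-1 by rewrite invr_ge0 !mulr_ge0 // ltW.
apply/andP; split; first by apply/mulr_ge0/sumr_ge0 => // x _; rewrite !mulr_ge0.
apply: ler_wpM2l => //; apply: ler_sum => x _.
by case: (k _); case: (k _); rewrite ?mul1r ?mul0r ?lexx ?ler0n.
Qed.

Variables (d : measure_display) (T : measurableType d) (P : probability T R).
Variable (X : var_index m -> T -> bool).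
Hypothesis X_meas :
  forall i, i \in relevant_vars Ej -> measurable [set t | X i t]%classic.
Hypothesis X_indep : mutually_independent P (relevant_vars Ej) X.
Hypothesis X_p : forall e, P [set t | X (inl e) t]%classic = p%:E.
Hypothesis X_q : forall e j g, g \in Ej e j ->
  P [set t | X (inr (e, j, g)) t]%classic = q%:E.

Definition sample (t : T) : outcome :=
  [ffun i => (i \in relevant_vars Ej) && X i t].

Lemma estimatorE t : estimator p q Ej etaW X t = estimate (sample t).
Proof.
rewrite /estimator /estimate; congr (_ * _).
rewrite pair_big_dep pair_big_dep; apply: eq_big => -[[e j] g] //= wedge_x.
by rewrite /wedge_weight !ffunE !inE /= wedge_x.
Qed.

Lemma sample_meas k : measurable [set t | sample t = k]%classic.
Proof.
have -> : [set t | sample t = k]%classic =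
    (\bigcap_(i in [set: var_index m])
       [set t | ((i \in relevant_vars Ej) && X i t) = k i])%classic.
  apply/seteqP; split => t /=; first by move=> <- i _; rewrite ffunE.
  by move=> coord; apply/ffunP => i; rewrite ffunE; apply: coord.
apply: fin_bigcap_measurable; first exact: finite_finset.
move=> i _; case: (boolP (i \in relevant_vars Ej)) => /= rel_i; last first.
  case: (k i).
    by have -> : [set t : T | false = true]%classic = set0 by apply/seteqP; split.
  by have -> : [set t : T | false = false]%classic = setT by apply/seteqP; split.
case: (k i); first exact: X_meas.
have -> : [set t | X i t = false]%classic = (~` [set t | X i t])%classic.
  by apply/seteqP; split => t /=; case: (X i t).
exact/measurableC/X_meas.
Qed.

Local Notation law := (law P sample).

Lemma law_wedge x : wedge x ->
  \sum_k law k * ((k (inl x.1.1))%:R * (k (inr x))%:R) = p * q.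
Proof.
case: x => -[e j] g wedge_x.
set S : {set var_index m} := [set inl e; inr (e, j, g)].
have S_rel : S \subset relevant_vars Ej.
  by apply/fintype.subsetP => i; rewrite !inE => /orP[/eqP -> | /eqP ->] //=.
have := X_indep (fun _ => true) S_rel.
rewrite big_setU1 ?inE //= big_set1 X_p X_q //=.
pose both_set (k : outcome) := k (inl e) && k (inr (e, j, g)).
have -> : [set t | forall i, i \in S -> X i t = true]%classic =
    [set t | both_set (sample t)]%classic.
  apply/seteqP; split => t; rewrite /= /both_set !ffunE.
    move=> all_true; have sample_true i : i \in S -> (i \in relevant_vars Ej) && X i t.
      by move=> iS; rewrite (fintype.subsetP S_rel) ?all_true.
    by rewrite !sample_true // !inE eqxx ?orbT.
  move=> /andP[/andP[_ Xe] /andP[_ Xg]] i.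
  by rewrite !inE => /orP[/eqP -> | /eqP ->].
rewrite prob_preimage; last exact: sample_meas.
move=> <- /=; rewrite [RHS]big_mkcond; apply: eq_bigr => k _; rewrite /both_set.
by case: (k _); case: (k _); rewrite /= ?mulr1 ?mulr0.
Qed.

Lemma mean_estimate : \sum_k law k * estimate k = total_weight / 3.
Proof.
have -> : \sum_k law k * estimate k =
    (3 * p * q)^-1 * \sum_(x | wedge x) (p * q) * wedge_weight x.
  rewrite /estimate; under eq_bigr => k _ do rewrite mulrCA mulr_sumr.
  rewrite -[LHS]mulr_sumr exchange_big /=; congr (_ * _); apply: eq_bigr => x wedge_x.
  rewrite -(law_wedge wedge_x) mulr_suml; apply: eq_bigr => k _; ring.
by rewrite -mulr_sumr /total_weight; field; rewrite !gt_eqF.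
Qed.

End WedgeEstimator.

(* Each instance has exactly one j-th edge, so summing eta_j over the edges
   counts every instance once. *)
Lemma sum_eta_at (R : realType) (V : finType) (m : nat)
    (src dst : 'I_m -> V) (time : 'I_m -> R) (mu : 'I_3 -> 'I_3 * 'I_3)
    (delta : R) (j : 'I_3) :
  (\sum_(e : 'I_m) eta_at src dst time mu delta j e
     = motif_count src dst time mu delta)%N.
Proof.
rewrite /motif_count /eta_at -[in RHS]sum1_card.
rewrite (partition_big (fun x : {ffun 'I_3 -> 'I_m} => x j) predT) //.
apply: eq_bigr => e _; rewrite -sum1_card; apply: eq_bigl => x.
by rewrite !inE.
Qed.

(* Every instance contains exactly one wedge through its j-th edge for each
   j, so the wedge weights add up to 3 C_M. *)
Lemma total_weight_count (R : realType) (V : finType) (m : nat)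
    (src dst : 'I_m -> V) (time : 'I_m -> R) (mu : 'I_3 -> 'I_3 * 'I_3)
    (delta : R) (Ej : 'I_m -> 'I_3 -> {set 'I_m})
    (etaW : 'I_m -> 'I_3 -> 'I_m -> nat) :
  (forall e j, \sum_(g in Ej e j) etaW e j g = eta_at src dst time mu delta j e) ->
  total_weight R Ej etaW = 3 * (motif_count src dst time mu delta)%:R.
Proof.
move=> hW; rewrite /total_weight /wedge_weight -(pair_big_dep xpredT
  (fun ej g => g \in Ej ej.1 ej.2) (fun ej g => (etaW ej.1 ej.2 g)%:R : R)).
rewrite -(pair_big xpredT xpredT
  (fun e j => \sum_(g in Ej e j) (etaW e j g)%:R : R)) exchange_big /=.
under eq_bigr => j _ do under eq_bigr => e _ do rewrite -natr_sum hW.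
under eq_bigr => j _ do rewrite -natr_sum sum_eta_at.
by rewrite sumr_const card_ord mulr_natl.
Qed.

Theorem mainTheorem6
  (R : realType) (V : finType) (m : nat)
  (src dst : 'I_m -> V) (time : 'I_m -> R)
  (time_pos : forall k, 0 < time k) (time_inj : injective time)
  (mu : 'I_3 -> 'I_3 * 'I_3) (mu_conn : motif_connected mu)
  (delta : R) (delta_ge0 : 0 <= delta)
  (Ej : 'I_m -> 'I_3 -> {set 'I_m}) (etaW : 'I_m -> 'I_3 -> 'I_m -> nat)
  (hW : forall e j, \sum_(g in Ej e j) etaW e j g
                    = eta_at src dst time mu delta j e)
  (p q : R) (hp : 0 < p <= 1) (hq : 0 < q <= 1)
  (d : measure_display) (T : measurableType d) (P : probability T R)
  (X : var_index m -> T -> bool)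
  (X_meas : forall i, i \in relevant_vars Ej -> measurable [set t | X i t]%classic)
  (X_indep : mutually_independent P (relevant_vars Ej) X)
  (X_p : forall e, P [set t | X (inl e) t]%classic = p%:E)
  (X_q : forall e j g, g \in Ej e j -> P [set t | X (inr (e, j, g)) t]%classic = q%:E)
  (eps : R) (heps : 0 < eps)
  (hC : (0 < motif_count src dst time mu delta)%N) :
  let C := (motif_count src dst time mu delta)%:R : R in
  (P [set t | (eps * C <= `| estimator p q Ej etaW X t - C |)%R]%classic
    <= ((1 - p * q) / (p * q * eps ^+ 2))%R%:E)%E.
Proof.
cbv zeta; set C := (motif_count src dst time mu delta)%:R : R.
have [/andP[p_gt0 _] /andP[q_gt0 _]] := (hp, hq).
have C_gt0 : 0 < C by rewrite ltr0n.
have weight3C : total_weight R Ej etaW = 3 * C := total_weight_count hW.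
have mean : \sum_k law P (sample Ej X) k * estimate p q Ej etaW k = C.
  by rewrite mean_estimate // weight3C mulrC mulKf ?pnatr_eq0.
have bounded k : 0 <= estimate p q Ej etaW k <= C / (p * q).
  have := estimate_bounds Ej etaW p_gt0 q_gt0 k.
  suff <- : (3 * p * q)^-1 * total_weight R Ej etaW = C / (p * q) by [].
  by rewrite weight3C; field; rewrite !gt_eqF.
have -> : [set t | eps * C <= `|estimator p q Ej etaW X t - C|]%classic =
    [set t | eps * C <= `|estimate p q Ej etaW (sample Ej X t) - C|]%classic.
  by apply/seteqP; split => t /=; rewrite estimatorE.
apply: le_trans.
  exact: (chebyshev_finite P (sample_meas X_meas) (estimate p q Ej etaW) C
            (mulr_gt0 heps C_gt0)).
rewrite lee_fin.
apply: le_trans (ler_wpM2r _ (variance_le_bounded _ _ bounded mean)) _.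
- by rewrite invr_ge0 sqr_ge0.
- exact: law_ge0.
- exact/law_sum1/sample_meas.
by rewrite le_eqVlt; apply/orP; left; apply/eqP; field; rewrite !gt_eqF.
Qed.
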